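(* Let $A=(a(x),dF(x))$ and $B=(b(x),dF(x))$ be games. Then $h(p)=1/\int\frac{1}{pa(x)+(1-p)b(x)}\,dF(x)$ is continuous on $[0,1]$.
   Context: A game is a pair $(a(x),dF(x))$ with $dF$ a probability measure on $\mathbb{R}$ and $a\ge0$ measurable with finite positive integral. Convention: $1/(+\infty)=0$. *)

From HB Require Import structures.
From mathcomp Require Import all_boot all_order all_algebra.
From mathcomp Require Import all_classical all_reals all_analysis.
Set Implicit Arguments. Unset Strict Implicit. Unset Printing Implicit Defensive.
Import Order.TTheory GRing.Theory Num.Theory.
Import numFieldNormedType.Exports.
Local Open Scope classical_set_scope.
Local Open Scope ring_scope.

Definition game (R : realType) (F : probability R R) (a : R -> R) : Prop :=
  [/\ (forall x, 0 <= a x), measurable_fun setT a &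
      (0 < \int[F]_x (a x)%:E < +oo)%E].

Definition einv (R : realType) (y : \bar R) : \bar R :=
  match y with
  | r%:E => if r == 0 then +oo%E else (r^-1)%:E
  | +oo%E => 0%E
  | -oo%E => 0%E
  end.

(* h(p) = 1 / \int 1/(p a(x) + (1-p) b(x)) dF(x), with 1/(+oo) = 0.
   The integral is always > 0 (positive integrand, probability measure),
   so h is real-valued. *)
Definition hfun (R : realType) (F : probability R R) (a b : R -> R) (p : R) : R :=
  fine (einv (\int[F]_x einv ((p * a x + (1 - p) * b x)%:E))).

(* Write I(p) for the integral, so that h = 1/I with 1/(+oo) = 0.  The integrand
   never vanishes, so I > 0 and continuity of h at q follows from I(p) -> I(q) in
   [0, +oo].  Upper semicontinuity: for p, q in [0, 1] the mixture at p dominates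
   (1 - k|p - q|) times the mixture at q, hence I(p) <= I(q) / (1 - k|p - q|).
   Lower semicontinuity: on {a + b <= n} the two mixtures differ by at most
   n|p - q|, so min(1/mix_q, n) <= (1 + n^2|p - q|) / mix_p there, and the
   integrals of these truncations increase to I(q) by monotone convergence. *)

From HB Require Import structures.
From mathcomp Require Import all_boot all_order all_algebra.
From mathcomp Require Import all_classical all_reals all_analysis.
From mathcomp Require Import measurable_realfun ring lra.
Import Order.TTheory GRing.Theory Num.Theory.
Import numFieldNormedType.Exports.
Local Open Scope classical_set_scope.
Local Open Scope ring_scope.

Section einv_properties.
Context {R : realType}.
Local Open Scope ereal_scope.

Lemma measurable_inv : measurable_fun [set: R] (@GRing.inv R).
Proof.
rewrite -(setvU [set 0%R]); apply/measurable_funU => //; first exact: measurableC.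
split; last exact: measurable_fun_set1.
apply: open_continuous_measurable_fun; first exact/closed_openC/closed_eq.
by move=> x /[!inE] /eqP x0; exact: inv_continuous.
Qed.

Lemma measurable_einv d (T : measurableType d) (f : T -> R) :
  measurable_fun [set: T] f -> measurable_fun [set: T] (fun x => einv (f x)%:E).
Proof.
move=> mf; apply: measurable_fun_ifT.
- by apply: measurable_fun_eqr => //; exact: measurable_cst.
- exact: measurable_cst.
- exact/measurable_EFinP/(measurableT_comp measurable_inv).
Qed.

Lemma einv_ge0 (s : R) : (0 <= s)%R -> 0 <= einv s%:E.
Proof. by move=> s0 /=; case: ifPn => // _; rewrite lee_fin invr_ge0. Qed.

Lemma einv_neq0 (s : R) : einv s%:E != 0.
Proof. by rewrite /=; case: ifPn => // s0; rewrite eqe invr_eq0. Qed.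

Lemma einv_le_scale (s t c : R) : (0 <= t)%R -> (0 < c)%R -> (c * t <= s)%R ->
  einv s%:E <= (c^-1)%:E * einv t%:E.
Proof.
move=> t0 c0 cts /=; have [_|tn0] := eqVneq t 0%R.
  by rewrite gt0_muley ?leey // lte_fin invr_gt0.
have tp : (0 < t)%R by rewrite lt_neqAle eq_sym tn0.
have sp : (0 < s)%R by apply: lt_le_trans cts; rewrite mulr_gt0.
by rewrite gt_eqF // -EFinM lee_fin -invfM lef_pV2 ?posrE ?mulr_gt0.
Qed.

(* The minimum is bounded by [n] when [n s <= 1] and by [1/s] otherwise. *)
Lemma mine_einv_le (s t d n : R) : (0 <= s)%R -> (0 <= t)%R -> (0 <= d)%R ->
  (0 <= n)%R -> (t <= s + d * n)%R ->
  mine (einv s%:E) n%:E <= (1 + n ^+ 2 * d)%:E * einv t%:E.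
Proof.
move=> s0 t0 d0 n0 ts.
have c0 : (0 < 1 + n ^+ 2 * d)%R by rewrite ltr_pwDl // mulr_ge0 // exprn_ge0.
rewrite /= [X in _ <= _ * X]/=; have [_|tn0] := eqVneq t 0%R.
  by rewrite gt0_muley ?leey // lte_fin.
have tp : (0 < t)%R by rewrite lt_neqAle eq_sym tn0.
rewrite -EFinM; have [ns1|ns1] := lerP (n * s) 1%R.
  rewrite ge_min lee_fin ler_pdivlMr // orbC; apply/orP; left.
  have : (n * t <= n * (s + d * n))%R by rewrite ler_wpM2l.
  by rewrite mulrDr expr2; nra.
have sp : (0 < s)%R.
  by rewrite lt_def s0 andbT; apply/eqP => s00; move: ns1; rewrite s00 mulr0 ltr10.
rewrite ge_min gt_eqF // lee_fin ler_pdivlMr // mulrC ler_pdivrMr //; apply/orP; left.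
have : (0 <= d * n * (n * s - 1))%R by rewrite !mulr_ge0 // subr_ge0 ltW.
nra.
Qed.

End einv_properties.

Section ereal_limits.
Context {R : realType} {T : Type} {G : set_system T} {FG : Filter G}.
Local Open Scope ereal_scope.

Lemma cvge_scale1 {c : T -> R} {y : \bar R} :
  c @ G --> (1%R : R) -> (fun t => (c t)%:E * y) @ G --> y.
Proof.
move=> c1; rewrite -[X in _ --> X]mul1e.
apply: cvgeM; last exact: cvg_cst.
- by case: y => [r| |]; [exact: mule_def_fin | exact: mule_def_neq0_infty ..].
- by apply/fine_cvgP; split; first exact: nearW.
Qed.

Lemma cvg_fine_einv (I : T -> \bar R) (l : \bar R) : 0 < l ->
  (forall L : R, L%:E < l -> \forall t \near G, L%:E < I t) ->
  (forall U : R, l < U%:E -> \forall t \near G, I t < U%:E) ->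
  (fun t => fine (einv (I t))) @ G --> fine (einv l).
Proof.
case: l => [r| |] // r0 lowI uppI.
- rewrite lte_fin in r0; rewrite /= gt_eqF //=.
  have near_r e : (0 < e)%R -> \forall t \near G, (r - e)%:E < I t < (r + e)%:E.
    move=> e0; near=> t; apply/andP; split; near: t.
      by apply: lowI; rewrite lte_fin gtrBl.
    by apply: uppI; rewrite lte_fin ltrDl.
  have fineI : (fun t => fine (I t)) @ G --> r.
    apply/cvgrPdist_lt => e e0; near=> t.
    have /andP[] : (r - e)%:E < I t < (r + e)%:E by near: t; exact: near_r.
    by case: (I t) => // s; rewrite !lte_fin ltr_distlC => -> ->.
  apply: cvg_trans (cvgV (lt0r_neq0 r0) fineI); apply: near_eq_cvg; near=> t.
  have /andP[] : (r - r / 2)%:E < I t < (r + r / 2)%:E.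
    by near: t; apply: near_r; rewrite divr_gt0.
  rewrite /=; case: (I t) => // s; rewrite !lte_fin => rs _ /=.
  by rewrite gt_eqF // (lt_trans _ rs) // subr_gt0 ltr_pdivrMr // ltr_pMr // ltr1n.
- rewrite /=; apply/cvgrPdist_lt => e e0; near=> t.
  have : (e^-1)%:E < I t by near: t; apply: lowI; rewrite ltry.
  case: (I t) => [s| |] //=; last by rewrite subrr normr0.
  rewrite lte_fin => es; have s0 : (0 < s)%R by rewrite (lt_trans _ es) ?invr_gt0.
  by rewrite gt_eqF //= sub0r normrN gtr0_norm ?invr_gt0 // -(invrK e) ltf_pV2 ?posrE ?invr_gt0.
Unshelve. all: by end_near. Qed.

End ereal_limits.

Lemma ge0_le_integral_scale d (T : measurableType d) (R : realType)
    (mu : {measure set T -> \bar R}) (f g : T -> \bar R) (c : R) : 0 <= c ->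
  (forall x, 0 <= f x)%E -> (forall x, 0 <= g x)%E ->
  measurable_fun setT f -> measurable_fun setT g ->
  (forall x, f x <= c%:E * g x)%E -> (\int[mu]_x f x <= c%:E * \int[mu]_x g x)%E.
Proof.
move=> c0 f0 g0 mf mg fg.
rewrite -(ge0_integralZl_EFin mu measurableT (fun x _ => g0 x) mg c0).
apply: ge0_le_integral => //; first exact: emeasurable_funM.
Qed.

(* A lower bound for min(p / q, (1 - p) / (1 - q)) tending to 1 as p -> q.  At
   q = 0 or q = 1 one inverse is the junk value 0, harmlessly. *)
Definition ratio_lb {R : realType} (q p : R) := 1 - (q^-1 + (1 - q)^-1) * `|p - q|.

Lemma ratio_lb_le {R : realType} {p q : R} :
  0 <= p <= 1 -> 0 <= q <= 1 -> ratio_lb q p * q <= p.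
Proof.
rewrite /ratio_lb => /andP[p0 p1] /andP[q0 q1].
have [->|qn0] := eqVneq q 0; first by rewrite mulr0.
have qV : q^-1 * q = 1 by rewrite mulVf.
have -> : (1 - (q^-1 + (1 - q)^-1) * `|p - q|) * q =
    q - `|p - q| * (q^-1 * q) - (1 - q)^-1 * q * `|p - q| by ring.
have : 0 <= (1 - q)^-1 * q * `|p - q| by rewrite !mulr_ge0 // invr_ge0 subr_ge0.
have : q - p <= `|p - q| by rewrite distrC ler_norm.
by rewrite qV mulr1; lra.
Qed.

Lemma cvg_inv1D_dist {R : realType} (k q : R) :
  (1 + k * `|p - q|)^-1 @[p --> q] --> (1 : R).
Proof.
have lin1 : (1 + k * `|p - q|) @[p --> q] --> (1 : R).
  have := cvgD (cvg_cst (1 : R))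
    (cvgM (cvg_cst k) (cvg_norm (cvgB (@cvg_id _ (nbhs q)) (cvg_cst q)))).
  by rewrite subrr normr0 mulr0 addr0; apply; exact: nbhs_filter.
by have := cvgV (oner_neq0 R) lin1; rewrite invr1; apply; exact: nbhs_filter.
Qed.

Lemma cvg_inv_ratio_lb {R : realType} (q : R) : (ratio_lb q p)^-1 @[p --> q] --> (1 : R).
Proof.
have -> : ratio_lb q = fun p => 1 + (- (q^-1 + (1 - q)^-1)) * `|p - q|.
  by apply/funext => p; rewrite /ratio_lb mulNr.
exact: cvg_inv1D_dist.
Qed.

Lemma near_within_itv {R : realType} (l r q : R) :
  \forall p \near within `[l, r] (nbhs q), l <= p <= r.
Proof.
near=> p; suff : `[l, r]%classic p by rewrite /= in_itv.
by near: p; exact: withinT.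
Unshelve. all: by end_near. Qed.

Section mixture.
Context {R : realType} (F : probability R R) (a b : R -> R).
Hypotheses (a_ge0 : forall x, 0 <= a x) (b_ge0 : forall x, 0 <= b x).
Hypotheses (ma : measurable_fun setT a) (mb : measurable_fun setT b).

Definition mix (p : R) x := p * a x + (1 - p) * b x.
Definition Imix p := (\int[F]_x einv (mix p x)%:E)%E.

Lemma mix_ge0 p x : 0 <= p <= 1 -> 0 <= mix p x.
Proof.
by move=> /andP[p0 p1]; rewrite addr_ge0 // mulr_ge0 // subr_ge0.
Qed.

Lemma measurable_inv_mix p : measurable_fun setT (fun x => einv (mix p x)%:E).
Proof.
by apply/measurable_einv/measurable_funD; apply: measurable_funM => //; exact: measurable_cst.
Qed.

Lemma inv_mix_ge0 p x : 0 <= p <= 1 -> (0 <= einv (mix p x)%:E)%E.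
Proof. by move=> p01; rewrite einv_ge0 // mix_ge0. Qed.

Lemma Imix_gt0 p : 0 <= p <= 1 -> (0 < Imix p)%E.
Proof.
move=> p01; rewrite lt_def integral_ge0 ?andbT; last by move=> x _; exact: inv_mix_ge0.
apply/eqP => I0.
have [N [mN FN0 sN]] : ae_eq F setT (fun x => einv (mix p x)%:E) (cst 0%E).
  apply/ae_eq_integral_abs => //; first exact: measurable_inv_mix.
  by rewrite -I0; apply: eq_integral => x _; rewrite gee0_abs // inv_mix_ge0.
have : F setT = 0%E.
  apply: subset_measure0 FN0 => // x _; apply: sN => /(_ I) /eqP.
  by rewrite (negPf (einv_neq0 _)).
by rewrite probability_setT => /eqP; rewrite eqe oner_eq0.
Qed.

Lemma mix_ge_scale p q x : 0 <= p <= 1 -> 0 <= q <= 1 ->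
  ratio_lb q p * mix q x <= mix p x.
Proof.
move=> p01 q01; rewrite /mix mulrDr !mulrA.
apply: lerD; apply: ler_wpM2r => //; first exact: ratio_lb_le.
have w01 (r : R) : 0 <= r <= 1 -> 0 <= 1 - r <= 1.
  by case/andP=> r0 r1; rewrite subr_ge0 gerBl r0 r1.
have := ratio_lb_le (w01 _ p01) (w01 _ q01).
rewrite /ratio_lb subKr [_ + q^-1]addrC (_ : 1 - p - (1 - q) = q - p) 1?distrC //; ring.
Qed.

Lemma Imix_le_scale p q : 0 <= p <= 1 -> 0 <= q <= 1 ->
  0 < ratio_lb q p -> (Imix p <= ((ratio_lb q p)^-1)%:E * Imix q)%E.
Proof.
move=> p01 q01 c0; apply: ge0_le_integral_scale; rewrite ?invr_ge0 ?ltW //.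
- by move=> x; exact: inv_mix_ge0.
- by move=> x; exact: inv_mix_ge0.
- exact: measurable_inv_mix.
- exact: measurable_inv_mix.
by move=> x; apply: einv_le_scale => //; [exact: mix_ge0 | exact: mix_ge_scale].
Qed.

Definition inv_mix_trunc (n : nat) p x : \bar R :=
  if a x + b x <= n%:R then mine (einv (mix p x)%:E) n%:R%:E else 0%E.

Lemma measurable_inv_mix_trunc n p : measurable_fun setT (inv_mix_trunc n p).
Proof.
apply: measurable_fun_ifT; last exact: measurable_cst.
- by apply: measurable_fun_ler; [exact: measurable_funD | exact: measurable_cst].
- by apply: measurable_mine; [exact: measurable_inv_mix | exact: measurable_cst].
Qed.

Lemma inv_mix_trunc_ge0 n p x : 0 <= p <= 1 -> (0 <= inv_mix_trunc n p x)%E.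
Proof.
by move=> p01; rewrite /inv_mix_trunc; case: ifPn => // _; rewrite le_min inv_mix_ge0 // lee0n.
Qed.

Lemma nd_inv_mix_trunc p x : 0 <= p <= 1 -> nondecreasing_seq (fun n => inv_mix_trunc n p x).
Proof.
move=> p01 m n mn; rewrite /inv_mix_trunc; case: ifPn => [abm|_]; last exact: inv_mix_trunc_ge0.
have -> : a x + b x <= n%:R by rewrite (le_trans abm) // ler_nat.
by rewrite le_min !ge_min lexx lee_fin ler_nat mn orbT.
Qed.

Lemma cvg_inv_mix_trunc p x :
  inv_mix_trunc n p x @[n --> \oo] --> einv (mix p x)%:E.
Proof.
case Ep : (einv (mix p x)%:E) => [r| |]; last by move: Ep => /=; case: ifP.
- apply: cvg_near_cst; near=> n.
  rewrite /inv_mix_trunc ifT; last by near: n; exact: nbhs_infty_ger.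
  by rewrite Ep min_l // lee_fin; near: n; exact: nbhs_infty_ger.
- have nR_cvg : (n%:R : R)%:E @[n --> \oo] --> +oo%E by apply/cvgenyP.
  apply: cvg_trans nR_cvg; apply: near_eq_cvg; near=> n.
  rewrite /inv_mix_trunc ifT; last by near: n; exact: nbhs_infty_ger.
  by rewrite Ep min_r // leey.
Unshelve. all: by end_near. Qed.

Lemma cvg_integral_inv_mix_trunc p : 0 <= p <= 1 ->
  (\int[F]_x inv_mix_trunc n p x)%E @[n --> \oo] --> Imix p.
Proof.
move=> p01; rewrite /Imix (eq_integral (fun x => limn (fun n => inv_mix_trunc n p x))).
  apply: cvg_monotone_convergence => //.
  - by move=> n; exact: measurable_inv_mix_trunc.
  - by move=> n x _; exact: inv_mix_trunc_ge0.
  - by move=> x _; exact: nd_inv_mix_trunc.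
by move=> x _; apply/esym/cvg_lim => //; exact: cvg_inv_mix_trunc.
Qed.

Lemma inv_mix_trunc_le n p q x : 0 <= p <= 1 -> 0 <= q <= 1 ->
  (inv_mix_trunc n q x <= (1 + n%:R ^+ 2 * `|p - q|)%:E * einv (mix p x)%:E)%E.
Proof.
move=> p01 q01; rewrite /inv_mix_trunc; case: ifPn => [abn|_].
  apply: mine_einv_le; rewrite ?mix_ge0 //.
  rewrite -lerBlDl (_ : mix p x - mix q x = (p - q) * (a x - b x)); last by rewrite /mix; ring.
  rewrite (le_trans (ler_norm _)) // normrM ler_wpM2l //.
  by rewrite (le_trans (ler_normB _ _)) // !ger0_norm.
by rewrite mule_ge0 ?inv_mix_ge0 // lee_fin addr_ge0 // mulr_ge0 // exprn_ge0.
Qed.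

Lemma integral_inv_mix_trunc_le n p q : 0 <= p <= 1 -> 0 <= q <= 1 ->
  (\int[F]_x inv_mix_trunc n q x <= (1 + n%:R ^+ 2 * `|p - q|)%:E * Imix p)%E.
Proof.
move=> p01 q01; apply: ge0_le_integral_scale.
- by rewrite addr_ge0 // mulr_ge0 // exprn_ge0.
- by move=> x; exact: inv_mix_trunc_ge0.
- by move=> x; exact: inv_mix_ge0.
- exact: measurable_inv_mix_trunc.
- exact: measurable_inv_mix.
by move=> x; exact: inv_mix_trunc_le.
Qed.

Lemma Imix_lower_semicontinuous q : 0 <= q <= 1 -> forall L : R,
  (L%:E < Imix q)%E -> \forall p \near within `[0, 1] (nbhs q), (L%:E < Imix p)%E.
Proof.
move=> q01 L LIq.
have [n LJn] : exists n, (L%:E < \int[F]_x inv_mix_trunc n q x)%E.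
  apply: (@filter_ex _ \oo).
  exact: cvg_integral_inv_mix_trunc _ q01 _ (open_ereal_gt' LIq).
set J := (\int[F]_x inv_mix_trunc n q x)%E.
set c := fun p => (1 + n%:R ^+ 2 * `|p - q|)^-1.
have cvg_c : c @ within `[0, 1] (nbhs q) --> (1 : R).
  exact: cvg_within_filter (cvg_inv1D_dist _ q).
have LJp := cvge_scale1 cvg_c _ (open_ereal_gt' LJn).
near=> p; apply: (@lt_le_trans _ _ ((c p)%:E * J)%E); first by near: p; exact: LJp.
rewrite lee_pdivrMl; last by rewrite ltr_pwDl // mulr_ge0 // exprn_ge0.
by apply: integral_inv_mix_trunc_le => //; near: p; exact: near_within_itv.
Unshelve. all: by end_near. Qed.

Lemma Imix_upper_semicontinuous q : 0 <= q <= 1 -> forall U : R,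
  (Imix q < U%:E)%E -> \forall p \near within `[0, 1] (nbhs q), (Imix p < U%:E)%E.
Proof.
move=> q01 U IqU.
have cvg_c : (ratio_lb q p)^-1 @[p --> within `[0, 1] (nbhs q)] --> (1 : R).
  exact: cvg_within_filter (cvg_inv_ratio_lb q).
have IpU := cvge_scale1 cvg_c _ (open_ereal_lt' IqU).
near=> p; apply: (@le_lt_trans _ _ (((ratio_lb q p)^-1)%:E * Imix q)%E).
  apply: Imix_le_scale => //; first by near: p; exact: near_within_itv.
  by rewrite -invr_gt0; near: p; exact: (cvgr_gt _ cvg_c _ ltr01).
by near: p; exact: IpU.
Unshelve. all: by end_near. Qed.

End mixture.

Theorem lemmaD12 (R : realType) (F : probability R R) (a b : R -> R) :
  game F a -> game F b ->
  {within `[0, 1], continuous (hfun F a b)}.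
Proof.
move=> [a0 ma _] [b0 mb _]; apply/subspace_continuousP => q /=; rewrite in_itv /= => q01.
apply: (@cvg_fine_einv _ _ _ _ (Imix F a b)); first exact: Imix_gt0.
- exact: Imix_lower_semicontinuous.
- exact: Imix_upper_semicontinuous.
Qed.
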